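(* Let $x\in J$. Then $x$ is an extreme point of $B_J$ if and only if $x$ has NPR hereditarily and $\|x\|_2=1$.
   Context: For a real sequence $x=(x(n))_{n\in\mathbb N}$ let $\|x\|_J=\sup\bigl(\sum_{i=1}^n|\sum_{k\in I_i}x(k)|^2\bigr)^{1/2}$ over all $n$ and all families of pairwise disjoint intervals $I_1,\dots,I_n$ of $\mathbb N$ (intervals: nonempty sets of consecutive positive integers, possibly infinite). $J=\{x:\|x\|_J<\infty\}$ with closed unit ball $B_J$; $\|\cdot\|_2$ is the $\ell_2$ norm; for $x\in J$ the series $\sum_n x(n)$ and $\sum_{n\in I}x(n)$ (for intervals $I$) converge. For $A\subset\mathbb N$, $x|_A$ equals $x$ on $A$ and $0$ off $A$. A vector $x\in J$ has non-positive remainder (NPR) if $|\sum_n x(n)|^2\le\sum_n|x(n)|^2$; it has NPR hereditarily if $x|_I$ has NPR for every interval $I$ of $\mathbb N$. *)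

From Stdlib Require Import Reals Lra List Arith ClassicalDescription.
From Coquelicot Require Import Coquelicot.
Open Scope R_scope.

(* Sequences x = (x(n))_{n in N}; we index the positive integers 1,2,3,...
   by 0,1,2,... (an order-preserving relabelling). *)

Definition is_interval (I : nat -> Prop) : Prop :=
  (exists n, I n) /\
  (forall a b c, (a <= b)%nat -> (b <= c)%nat -> I a -> I c -> I b).

Definition restrict (x : nat -> R) (A : nat -> Prop) : nat -> R :=
  fun k => if excluded_middle_informative (A k) then x k else 0.

Definition isum (x : nat -> R) (I : nat -> Prop) : R := Series (restrict x I).

Definition family_sq (x : nat -> R) (n : nat) (I : nat -> nat -> Prop) : R :=
  fold_right Rplus 0 (map (fun i => (Rabs (isum x (I i))) ^ 2) (seq 0 n)).

Definition disjoint_family (n : nat) (I : nat -> nat -> Prop) : Prop :=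
  (forall i, (i < n)%nat -> is_interval (I i)) /\
  (forall i j, (i < n)%nat -> (j < n)%nat -> i <> j -> forall k, ~ (I i k /\ I j k)).

Definition Jnorm (x : nat -> R) : Rbar :=
  Lub_Rbar (fun r => exists n I, disjoint_family n I /\ r = sqrt (family_sq x n I)).

Definition inJ (x : nat -> R) : Prop := Rbar_lt (Jnorm x) p_infty.

Definition in_BJ (x : nat -> R) : Prop := inJ x /\ Rbar_le (Jnorm x) 1.

Definition extreme_BJ (x : nat -> R) : Prop :=
  in_BJ x /\
  forall (y z : nat -> R) (t : R), in_BJ y -> in_BJ z -> 0 < t < 1 ->
    (forall n, x n = t * y n + (1 - t) * z n) ->
    (forall n, y n = z n).

Definition l2norm (x : nat -> R) : R := sqrt (Series (fun n => (Rabs (x n)) ^ 2)).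

Definition NPR (x : nat -> R) : Prop :=
  (Rabs (Series x)) ^ 2 <= Series (fun n => (Rabs (x n)) ^ 2).

Definition NPR_hered (x : nat -> R) : Prop :=
  forall I, is_interval I -> NPR (restrict x I).

(* If [x] has NPR on every interval, then for disjoint intervals
   [Σ_i |Σ_{I_i} x|^2 <= Σ_i Σ_{I_i} x^2 <= ‖x‖_2^2], so [‖x‖_J <= ‖x‖_2];
   singletons give [‖·‖_2 <= ‖·‖_J].  Hence for [‖x‖_2 = 1] a decomposition
   of [x] inside [B_J] is one inside the Hilbert ball, where [x] is extreme.

   Conversely let [x] be extreme.  NPR on [p, r] follows by induction on its
   length: if it fails on [p, r] but holds on all proper subintervals, every
   family of disjoint intervals that does not put [p] and [r] into one member
   has square sum at most [1 - δ], [δ > 0] the NPR defect of [p, r] (glue to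
   [p, r] the members that stick out of it on the side where this helps).  So
   [x ± (δ/8) (e_p - e_r)] stay in [B_J], which contradicts extremality.
   Infinite intervals follow by truncation, and then [‖x‖_J <= ‖x‖_2] forces
   [‖x‖_2 = 1], or else [x] would be the midpoint of [(1 ± η) x]. *)

From Stdlib Require Import Reals Lra Lia List Arith ClassicalDescription Classical Wf_nat
  FunctionalExtensionality.
From Coquelicot Require Import Coquelicot.
Open Scope R_scope.

Definition fsum (n : nat) (f : nat -> R) : R := fold_right Rplus 0 (map f (seq 0 n)).

Lemma fsum_S n f : fsum (S n) f = fsum n f + f n.
Proof.
  unfold fsum; rewrite seq_S, map_app, fold_right_app; simpl.
  induction (map f (seq 0 n)) as [|a l IH]; simpl; [ring | rewrite IH; ring].
Qed.

Lemma fsum_ext n f g : (forall i, (i < n)%nat -> f i = g i) -> fsum n f = fsum n g.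
Proof.
  induction n as [|n IH]; intros H; [reflexivity|].
  rewrite !fsum_S, IH, H by (auto; lia); reflexivity.
Qed.

Lemma fsum_le n f g : (forall i, (i < n)%nat -> f i <= g i) -> fsum n f <= fsum n g.
Proof.
  induction n as [|n IH]; intros H; [cbn; lra|].
  rewrite !fsum_S; apply Rplus_le_compat; [apply IH; intros i Hi|]; apply H; lia.
Qed.

Lemma fsum_plus n f g : fsum n (fun i => f i + g i) = fsum n f + fsum n g.
Proof. induction n as [|n IH]; [cbn; ring|]. rewrite !fsum_S, IH; ring. Qed.

Lemma fsum_scal n c f : fsum n (fun i => c * f i) = c * fsum n f.
Proof. induction n as [|n IH]; [cbn; ring|]. rewrite !fsum_S, IH; ring. Qed.

Lemma fsum_zero n : fsum n (fun _ => 0) = 0.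
Proof. induction n as [|n IH]; [reflexivity|]. rewrite fsum_S, IH; ring. Qed.

Lemma fsum_nonneg n f : (forall i, (i < n)%nat -> 0 <= f i) -> 0 <= fsum n f.
Proof. intros H; rewrite <- (fsum_zero n); now apply fsum_le. Qed.

Lemma fsum_indicator_none n (P : nat -> Prop) (g : nat -> R) :
  (forall i, (i < n)%nat -> ~ P i) ->
  fsum n (fun i => if excluded_middle_informative (P i) then g i else 0) = 0.
Proof.
  intros H; transitivity (fsum n (fun _ => 0)); [apply fsum_ext; intros i Hi|apply fsum_zero].
  destruct (excluded_middle_informative (P i)); [now exfalso; apply (H i)|reflexivity].
Qed.

Lemma fsum_indicator_unique n (P : nat -> Prop) (g : nat -> R) j :
  (j < n)%nat -> P j -> (forall i, (i < n)%nat -> P i -> i = j) ->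
  fsum n (fun i => if excluded_middle_informative (P i) then g i else 0) = g j.
Proof.
  induction n as [|n IH]; intros Hj Pj H; [lia|].
  rewrite fsum_S; destruct (Nat.eq_dec j n) as [->|Hne].
  - rewrite fsum_indicator_none by (intros i Hi Pi; specialize (H i ltac:(lia) Pi); lia).
    destruct (excluded_middle_informative (P n)); [ring | contradiction].
  - rewrite IH by (auto; lia).
    destruct (excluded_middle_informative (P n)) as [Pn|]; [|ring].
    specialize (H n ltac:(lia) Pn); lia.
Qed.

Lemma fsum_indicator_le n (P : nat -> Prop) (g : R) : 0 <= g ->
  (forall i j, (i < n)%nat -> (j < n)%nat -> P i -> P j -> i = j) ->
  fsum n (fun i => if excluded_middle_informative (P i) then g else 0) <= g.
Proof.
  intros Hg H; destruct (classic (exists j, (j < n)%nat /\ P j)) as [[j [Hj Pj]]|Hno].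
  - rewrite (fsum_indicator_unique n P (fun _ => g) j Hj Pj); [lra|].
    intros i Hi Pi; apply H; auto.
  - rewrite fsum_indicator_none; [lra|]. intros i Hi Pi; apply Hno; eauto.
Qed.

Lemma fsum_sq_le_sq_fsum n (s : R) (m : nat -> R) : s <> 0 ->
  (forall i, (i < n)%nat -> 0 <= s * m i) -> fsum n (fun i => m i ^ 2) <= fsum n m ^ 2.
Proof.
  intros Hs; induction n as [|n IH]; intros H; [cbn; lra|].
  rewrite !fsum_S.
  assert (0 <= s * fsum n m) by (rewrite <- fsum_scal; apply fsum_nonneg; intros; apply H; lia).
  assert (0 <= s * m n) by (apply H; lia).
  assert (0 < Rsqr s) by (now apply Rsqr_pos_lt).
  assert (0 <= fsum n m * m n) by (unfold Rsqr in *; nra).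
  assert (fsum n (fun i => m i ^ 2) <= fsum n m ^ 2) by (apply IH; intros; apply H; lia).
  nra.
Qed.

Definition convex (T : nat -> Prop) : Prop :=
  forall a b c, (a <= b)%nat -> (b <= c)%nat -> T a -> T c -> T b.

Definition Iv (p r : nat) : nat -> Prop := fun k => (p <= k <= r)%nat.

Lemma convex_Iv p r : convex (Iv p r).
Proof. unfold Iv; intros a b c; lia. Qed.

Lemma convex_const (P : Prop) : convex (fun _ => P).
Proof. now intros a b c. Qed.

Lemma convex_and A B : convex A -> convex B -> convex (fun k => A k /\ B k).
Proof.
  intros HA HB a b c Hab Hbc [Aa Ba] [Ac Bc].
  split; [apply (HA a b c) | apply (HB a b c)]; auto.
Qed.

Lemma convex_family_member n I i : disjoint_family n I -> (i < n)%nat -> convex (I i).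
Proof. intros [H _] Hi; exact (proj2 (H i Hi)). Qed.

Lemma disjoint_family_member_unique n I i j k : disjoint_family n I ->
  (i < n)%nat -> (j < n)%nat -> I i k -> I j k -> i = j.
Proof.
  intros HI Hi Hj A B; apply NNPP; intros Hij; exact (proj2 HI i j Hi Hj Hij k (conj A B)).
Qed.

Lemma convex_diff_Iv T p r : convex T -> ~ (T p /\ T r) ->
  convex (fun k => T k /\ ~ Iv p r k).
Proof.
  unfold Iv; intros HT Hpr a b c Hab Hbc [Ta Na] [Tc Nc]; split; [now apply (HT a b c)|].
  intros Hb; apply Hpr; split; [apply (HT a p c) | apply (HT a r c)]; auto; lia.
Qed.

Lemma convex_Iv_diff T p r : convex T -> T p \/ T r ->
  convex (fun k => Iv p r k /\ ~ T k).
Proof.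
  unfold Iv; intros HT Hpr a b c Hab Hbc [Ia Na] [Ic Nc]; split; [lia|].
  intros Tb; destruct Hpr as [Tp|Tr].
  - apply Na, (HT p a b); auto; lia.
  - apply Nc, (HT b c r); auto; lia.
Qed.

(* Every point between a point of the union and a point of [C] lies in the
   union: go through a point where the relevant [T j] meets [C]. *)
Lemma convex_union_meeting (C P : nat -> Prop) (T : nat -> nat -> Prop) :
  convex C -> (exists m, C m) ->
  (forall j, P j -> convex (T j) /\ exists m, C m /\ T j m) ->
  convex (fun k => C k \/ exists j, P j /\ T j k).
Proof.
  intros HC [m0 Cm0] HT.
  assert (Star : forall y m b, (C y \/ exists j, P j /\ T j y) -> C m ->
            (y <= b <= m \/ m <= b <= y)%nat -> C b \/ exists j, P j /\ T j b).
  { intros y m b [Cy|[j [Pj Tjy]]] Cm Hb.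
    - left; destruct Hb; [apply (HC y b m) | apply (HC m b y)]; tauto.
    - destruct (HT j Pj) as [Tj [mj [Cmj Tjmj]]].
      assert (((y <= b <= mj) \/ (mj <= b <= y)) \/ ((mj <= b <= m) \/ (m <= b <= mj)))%nat
        as [[Hb'|Hb']|[Hb'|Hb']] by lia.
      + right; exists j; split; [|apply (Tj y b mj)]; tauto.
      + right; exists j; split; [|apply (Tj mj b y)]; tauto.
      + left; apply (HC mj b m); tauto.
      + left; apply (HC m b mj); tauto. }
  intros a b c Hab Hbc Ua Uc.
  destruct (Nat.le_gt_cases b m0).
  - apply (Star a m0 b); auto.
  - apply (Star c m0 b); auto; lia.
Qed.

Lemma convex_bounded_Iv T N : convex T -> (exists k, T k) -> (forall k, T k -> (k <= N)%nat) ->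
  exists c d, forall k, T k <-> Iv c d k.
Proof.
  intros HT Hne HN.
  destruct (dec_inh_nat_subset_has_unique_least_element T (fun k => classic (T k)) Hne)
    as [c [[Tc Hc] _]].
  set (U := fun d => forall k, T k -> (k <= d)%nat).
  destruct (dec_inh_nat_subset_has_unique_least_element U (fun d => classic (U d))
              (ex_intro _ N HN)) as [d [[Ud Hd] _]].
  assert (Td : T d).
  { apply NNPP; intros nTd; destruct Hne as [k Tk].
    destruct d as [|d].
    - assert (k = 0%nat) as -> by (specialize (Ud k Tk); lia); contradiction.
    - assert (Ud' : U d).
      { intros j Tj; specialize (Ud j Tj).
        destruct (Nat.eq_dec j (S d)) as [->|]; [contradiction|lia]. }
      specialize (Hd d Ud'); lia. }
  exists c, d; intros k; unfold Iv; split.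
  - intros Tk; split; [apply Hc | apply Ud]; auto.
  - intros [H1 H2]; apply (HT c k d); auto.
Qed.

Lemma restrict_ext x A B : (forall k, A k <-> B k) ->
  forall k, restrict x A k = restrict x B k.
Proof.
  intros H k; specialize (H k); unfold restrict.
  destruct (excluded_middle_informative (A k)), (excluded_middle_informative (B k));
    tauto || reflexivity.
Qed.

Lemma isum_ext x A B : (forall k, A k <-> B k) -> isum x A = isum x B.
Proof. intros H; apply Series_ext, restrict_ext, H. Qed.

Lemma is_series_finite_support (a : nat -> R) N : (forall k, (N < k)%nat -> a k = 0) ->
  is_series a (sum_n a N).
Proof.
  intros H; apply filterlim_ext_loc with (fun _ => sum_n a N); [|apply filterlim_const].
  exists N; intros n Hn; induction Hn as [|n Hn IH]; [reflexivity|].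
  rewrite sum_Sn, H, <- IH by lia; symmetry; apply Rplus_0_r.
Qed.

Lemma ex_series_restrict_bounded x T N : (forall k, T k -> (k <= N)%nat) ->
  ex_series (restrict x T).
Proof.
  intros H; eexists; apply (is_series_finite_support _ N); intros k Hk; unfold restrict.
  destruct (excluded_middle_informative (T k)) as [Tk|]; [specialize (H k Tk); lia|reflexivity].
Qed.

Lemma ex_series_restrict_convex x T : ex_series x -> convex T -> ex_series (restrict x T).
Proof.
  intros Hx HT.
  destruct (classic (exists N, forall k, T k -> (k <= N)%nat)) as [[N HN]|Hunb].
  { now apply ex_series_restrict_bounded with N. }
  destruct (classic (exists a, T a)) as [[a Ta]|Hempty].
  2:{ apply ex_series_restrict_bounded with 0%nat; intros k Tk; exfalso; eauto. }
  assert (Htail : forall k, (a <= k)%nat -> T k).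
  { intros k Hk; apply NNPP; intros nTk; apply Hunb; exists k; intros j Tj.
    destruct (Nat.le_gt_cases j k) as [|Hkj]; [assumption|].
    exfalso; apply nTk, (HT a k j); auto; lia. }
  apply (ex_series_incr_n _ a), (ex_series_ext (fun k => x (a + k)%nat)).
  - intros k; unfold restrict.
    destruct (excluded_middle_informative (T (a + k)%nat)) as [|nT]; [reflexivity|].
    exfalso; apply nT, Htail; lia.
  - now apply ex_series_incr_n.
Qed.

Lemma isum_empty x A : (forall k, ~ A k) -> isum x A = 0.
Proof.
  intros H; unfold isum; rewrite (is_series_unique _ (sum_n (restrict x A) 0)).
  - rewrite sum_O; unfold restrict.
    destruct (excluded_middle_informative (A 0%nat)); [now exfalso; apply (H 0%nat)|reflexivity].
  - apply is_series_finite_support; intros k _; unfold restrict.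
    destruct (excluded_middle_informative (A k)); [now exfalso; apply (H k)|reflexivity].
Qed.

Lemma isum_Iv x n m : (n <= m)%nat -> isum x (Iv n m) = sum_n_m x n m.
Proof.
  intros Hnm; unfold isum, Iv.
  rewrite (is_series_unique _ (sum_n (restrict x (fun k => (n <= k <= m)%nat)) m)).
  2:{ apply is_series_finite_support; intros k Hk; unfold restrict.
      destruct (excluded_middle_informative _); [lia|reflexivity]. }
  unfold sum_n; destruct n as [|n].
  - apply sum_n_m_ext_loc; intros k Hk; unfold restrict.
    destruct (excluded_middle_informative _); [reflexivity|lia].
  - rewrite (sum_n_m_Chasles _ 0 n m) by lia.
    rewrite (sum_n_m_ext_loc _ (fun _ => zero) 0 n), sum_n_m_const_zero, plus_zero_l.
    + apply sum_n_m_ext_loc; intros k Hk; unfold restrict.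
      destruct (excluded_middle_informative _); [reflexivity|lia].
    + intros k Hk; unfold restrict.
      destruct (excluded_middle_informative _); [lia|reflexivity].
Qed.

Lemma isum_single x i : isum x (fun k => k = i) = x i.
Proof.
  rewrite (isum_ext x _ (Iv i i)) by (unfold Iv; lia).
  rewrite isum_Iv by lia; apply sum_n_n.
Qed.

Lemma isum_scal c x T : isum (fun k => c * x k) T = c * isum x T.
Proof.
  unfold isum; rewrite <- Series_scal_l; apply Series_ext; intros k; unfold restrict.
  destruct (excluded_middle_informative (T k)); ring.
Qed.

Lemma isum_plus x y T : ex_series (restrict x T) -> ex_series (restrict y T) ->
  isum (fun k => x k + y k) T = isum x T + isum y T.
Proof.
  intros Hx Hy; unfold isum; rewrite <- Series_plus by assumption.
  apply Series_ext; intros k; unfold restrict.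
  destruct (excluded_middle_informative (T k)); ring.
Qed.

Lemma isum_union x A B : ex_series (restrict x A) -> ex_series (restrict x B) ->
  (forall k, A k -> B k -> False) ->
  ex_series (restrict x (fun k => A k \/ B k)) /\
  isum x (fun k => A k \/ B k) = isum x A + isum x B.
Proof.
  intros HA HB Hd.
  assert (E : forall k, restrict x (fun k => A k \/ B k) k = restrict x A k + restrict x B k).
  { intros k; specialize (Hd k); unfold restrict.
    destruct (excluded_middle_informative (A k \/ B k)),
      (excluded_middle_informative (A k)), (excluded_middle_informative (B k));
      try ring; tauto. }
  split.
  - exact (ex_series_ext _ _ (fun k => eq_sym (E k)) (ex_series_plus _ _ HA HB)).
  - unfold isum; rewrite <- Series_plus by assumption; now apply Series_ext.
Qed.

Lemma isum_union_family x n (D : nat -> nat -> Prop) :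
  (forall i, (i < n)%nat -> ex_series (restrict x (D i))) ->
  (forall i j k, (i < n)%nat -> (j < n)%nat -> i <> j -> D i k -> D j k -> False) ->
  ex_series (restrict x (fun k => exists i, (i < n)%nat /\ D i k)) /\
  isum x (fun k => exists i, (i < n)%nat /\ D i k) = fsum n (fun i => isum x (D i)).
Proof.
  induction n as [|n IH]; intros Hex Hd.
  { rewrite isum_empty by (intros k [i [Hi _]]; lia).
    split; [apply ex_series_restrict_bounded with 0%nat; intros k [i [Hi _]]; lia|reflexivity]. }
  destruct IH as [IHex IHeq]; [intros; apply Hex; lia | intros i j k ? ?; apply Hd; lia|].
  assert (Hsplit : forall k, (exists i, (i < S n)%nat /\ D i k) <->
                    (exists i, (i < n)%nat /\ D i k) \/ D n k).
  { intros k; split.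
    - intros [i [Hi Dik]]; destruct (Nat.eq_dec i n) as [->|]; [now right|].
      left; exists i; split; [lia|assumption].
    - intros [[i [Hi Dik]]|Dnk]; [exists i | exists n]; split; auto. }
  destruct (isum_union x _ (D n) IHex (Hex n ltac:(lia))) as [Uex Ueq].
  { intros k [i [Hi Dik]] Dnk; apply (Hd i n k); auto; lia. }
  split.
  - exact (ex_series_ext _ _ (fun k => eq_sym (restrict_ext x _ _ Hsplit k)) Uex).
  - now rewrite (isum_ext x _ _ Hsplit), Ueq, IHeq, fsum_S.
Qed.

Lemma ex_series_restrict_subset g A B : (forall k, 0 <= g k) -> (forall k, A k -> B k) ->
  ex_series (restrict g B) -> ex_series (restrict g A).
Proof.
  intros Hg HAB HB; refine (ex_series_le (V := R_CompleteNormedModule) _ _ _ HB).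
  intros k; specialize (Hg k); specialize (HAB k); unfold restrict.
  destruct (excluded_middle_informative (A k)), (excluded_middle_informative (B k));
    try tauto; change norm with Rabs; rewrite ?Rabs_R0, ?Rabs_pos_eq; lra.
Qed.

Lemma isum_le_subset g A B : (forall k, 0 <= g k) -> (forall k, A k -> B k) ->
  ex_series (restrict g B) -> isum g A <= isum g B.
Proof.
  intros Hg HAB HB; apply Series_le; [|assumption]; intros k.
  specialize (Hg k); specialize (HAB k); unfold restrict.
  destruct (excluded_middle_informative (A k)), (excluded_middle_informative (B k));
    try tauto; lra.
Qed.

Lemma isum_nonneg g T : (forall k, 0 <= g k) -> ex_series (restrict g T) -> 0 <= isum g T.
Proof.
  intros Hg HT; rewrite <- (isum_empty g (fun _ => False)) by auto.
  apply isum_le_subset; auto; tauto.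
Qed.

Lemma fsum_isum_disjoint_le g n (D : nat -> nat -> Prop) B : (forall k, 0 <= g k) ->
  ex_series (restrict g B) -> (forall i k, (i < n)%nat -> D i k -> B k) ->
  (forall i j k, (i < n)%nat -> (j < n)%nat -> i <> j -> D i k -> D j k -> False) ->
  fsum n (fun i => isum g (D i)) <= isum g B.
Proof.
  intros Hg HB HSB Hd.
  destruct (isum_union_family g n D) as [_ <-].
  - intros i Hi; apply (ex_series_restrict_subset g _ B); eauto.
  - exact Hd.
  - apply isum_le_subset; auto; intros k [i [Hi Dik]]; eauto.
Qed.

Lemma restrict_full x k : restrict x (fun _ => True) k = x k.
Proof. unfold restrict; destruct (excluded_middle_informative True); tauto. Qed.

Lemma isum_full x : isum x (fun _ => True) = Series x.
Proof. apply Series_ext, restrict_full. Qed.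

Lemma ex_series_restrict_full x : ex_series x -> ex_series (restrict x (fun _ => True)).
Proof. apply ex_series_ext; intros k; symmetry; apply restrict_full. Qed.

Lemma Series_nonneg g : (forall k, 0 <= g k) -> ex_series g -> 0 <= Series g.
Proof.
  intros Hg Hex; rewrite <- isum_full.
  apply isum_nonneg; [exact Hg | now apply ex_series_restrict_full].
Qed.

(** * The unit ball of [J] *)

Definition Jbounded (x : nat -> R) (M : R) : Prop :=
  forall n I, disjoint_family n I -> family_sq x n I <= M.

Definition sq (x : nat -> R) : nat -> R := fun k => Rabs (x k) ^ 2.

Lemma sq_nonneg x k : 0 <= sq x k.
Proof. unfold sq; rewrite pow2_abs; apply pow2_ge_0. Qed.

Lemma family_sq_fsum x n I :
  family_sq x n I = fsum n (fun i => Rabs (isum x (I i)) ^ 2).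
Proof. reflexivity. Qed.

Lemma family_sq_nonneg x n I : 0 <= family_sq x n I.
Proof. apply fsum_nonneg; intros; apply pow2_ge_0. Qed.

Lemma sqrt_family_sq_le_Jnorm x n I : disjoint_family n I ->
  Rbar_le (sqrt (family_sq x n I)) (Jnorm x).
Proof. intros HI; apply Lub_Rbar_correct; exists n, I; auto. Qed.

Lemma family_sq_le_of_sqrt x n I l : sqrt (family_sq x n I) <= l -> family_sq x n I <= l ^ 2.
Proof.
  intros H; rewrite <- (sqrt_sqrt (family_sq x n I)) by apply family_sq_nonneg.
  pose proof (sqrt_pos (family_sq x n I)); simpl; nra.
Qed.

Lemma inJ_Jbounded x : inJ x -> exists M, Jbounded x M.
Proof.
  unfold inJ; intros Hx.
  assert (Hne : Rbar_le (sqrt (family_sq x 0 (fun _ _ => False))) (Jnorm x))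
    by (apply sqrt_family_sq_le_Jnorm; split; intros; lia).
  destruct (Jnorm x) as [l| |] eqn:E; try contradiction.
  exists (l ^ 2); intros n I HI; apply family_sq_le_of_sqrt.
  generalize (sqrt_family_sq_le_Jnorm x n I HI); rewrite E; auto.
Qed.

Lemma in_BJ_Jbounded x : in_BJ x -> Jbounded x 1.
Proof.
  intros [_ H1] n I HI; rewrite <- (pow1 2).
  apply family_sq_le_of_sqrt.
  exact (Rbar_le_trans _ _ 1 (sqrt_family_sq_le_Jnorm x n I HI) H1).
Qed.

Lemma Jbounded_in_BJ x : Jbounded x 1 -> in_BJ x.
Proof.
  intros H.
  assert (H1 : Rbar_le (Jnorm x) 1).
  { apply Lub_Rbar_correct; intros r [n [I [HI ->]]]; simpl.
    rewrite <- sqrt_1; apply sqrt_le_1_alt, H, HI. }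
  split; [|exact H1]; unfold inJ; destruct (Jnorm x); simpl in *; auto.
Qed.

(* Unlike in [disjoint_family], members may be empty. *)
Definition convex_family (n : nat) (I : nat -> nat -> Prop) : Prop :=
  (forall i, (i < n)%nat -> convex (I i)) /\
  (forall i j k, (i < n)%nat -> (j < n)%nat -> i <> j -> I i k -> I j k -> False).

Lemma convex_family_nonempty_members x n I : convex_family n I ->
  exists m J, disjoint_family m J /\ family_sq x m J = family_sq x n I /\
    (forall i, (i < m)%nat -> exists j, (j < n)%nat /\ J i = I j).
Proof.
  induction n as [|n IH]; intros [Hc Hd].
  { exists 0%nat, I; split; [split; intros; lia | split; [reflexivity | intros; lia]]. }
  destruct IH as [m [J [[HJi HJd] [HJsq HJI]]]].
  { split; [intros; apply Hc | intros i j k ? ?; apply Hd]; lia. }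
  destruct (classic (exists k, I n k)) as [Hne|Hempty].
  - exists (S m), (fun i => if Nat.eq_dec i m then I n else J i).
    split; [split|split].
    + intros i Hi; destruct (Nat.eq_dec i m); [split; [exact Hne | apply Hc; lia]|].
      apply HJi; lia.
    + intros i j Hi Hj Hij k.
      destruct (Nat.eq_dec i m), (Nat.eq_dec j m); subst; try lia.
      * destruct (HJI j) as [j' [Hj' ->]]; [lia|].
        intros [A B]; apply (Hd n j' k); auto; lia.
      * destruct (HJI i) as [i' [Hi' ->]]; [lia|].
        intros [A B]; apply (Hd i' n k); auto; lia.
      * apply HJd; lia.
    + rewrite !family_sq_fsum in *; rewrite !fsum_S, <- HJsq.
      destruct (Nat.eq_dec m m) as [_|]; [|lia].
      f_equal; apply fsum_ext; intros i Hi; destruct (Nat.eq_dec i m); [lia|reflexivity].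
    + intros i Hi; destruct (Nat.eq_dec i m); [exists n; split; auto|].
      destruct (HJI i) as [j [Hj E]]; [lia|]; exists j; split; [lia|exact E].
  - exists m, J; split; [split; assumption|split].
    + rewrite !family_sq_fsum in *; rewrite fsum_S, <- HJsq, isum_empty by firstorder.
      rewrite Rabs_R0; simpl; ring.
    + intros i Hi; destruct (HJI i Hi) as [j [Hj E]]; exists j; split; [lia|exact E].
Qed.

Lemma Jbounded_convex_family x M n I : Jbounded x M -> convex_family n I ->
  family_sq x n I <= M.
Proof.
  intros H HI; destruct (convex_family_nonempty_members x n I HI) as [m [J [HJ [<- _]]]].
  now apply H.
Qed.

Lemma Jbounded_sq_isum x M T : Jbounded x M -> convex T -> (isum x T) ^ 2 <= M.
Proof.
  intros H HT.
  assert (H1 := Jbounded_convex_family x M 1 (fun _ => T) H).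
  rewrite family_sq_fsum in H1; rewrite fsum_S, pow2_abs in H1; cbn in H1.
  rewrite Rplus_0_l in H1; apply H1; split; intros; [assumption | lia].
Qed.

Lemma disjoint_blocks x eps : 0 < eps ->
  (forall N, exists n m, (N <= n <= m)%nat /\ eps <= Rabs (sum_n_m x n m)) ->
  forall K, exists N I, disjoint_family K I /\
    (forall i k, (i < K)%nat -> I i k -> (k < N)%nat) /\ INR K * eps ^ 2 <= family_sq x K I.
Proof.
  intros Heps Hfar; induction K as [|K IH].
  { exists 0%nat, (fun _ _ => False); split; [split; intros; lia|].
    split; [intros; lia | rewrite family_sq_fsum; cbn; lra]. }
  destruct IH as [N [I [[HIi HId] [HIN HIsq]]]].
  destruct (Hfar N) as [n [m [Hnm He]]].
  exists (S m), (fun i => if Nat.eq_dec i K then Iv n m else I i).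
  split; [split|split].
  - intros i Hi; destruct (Nat.eq_dec i K).
    + split; [exists n; unfold Iv; lia | apply convex_Iv].
    + apply HIi; lia.
  - intros i j Hi Hj Hij k; destruct (Nat.eq_dec i K), (Nat.eq_dec j K); subst; try lia.
    + intros [A B]; apply HIN in B; unfold Iv in A; lia.
    + intros [A B]; apply HIN in A; unfold Iv in B; lia.
    + apply HId; lia.
  - intros i k Hi; destruct (Nat.eq_dec i K); [unfold Iv; lia|].
    intros Hk; apply HIN in Hk; lia.
  - rewrite family_sq_fsum in *; rewrite fsum_S, S_INR.
    rewrite (fsum_ext K _ (fun i => Rabs (isum x (I i)) ^ 2))
      by (intros i Hi; destruct (Nat.eq_dec i K); [lia|reflexivity]).
    destruct (Nat.eq_dec K K) as [_|]; [|lia].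
    rewrite isum_Iv by lia.
    assert (eps ^ 2 <= Rabs (sum_n_m x n m) ^ 2) by (simpl; nra).
    lra.
Qed.

Lemma Jbounded_ex_series x M : Jbounded x M -> ex_series x.
Proof.
  intros H; apply (ex_series_Cauchy (V := R_CompleteNormedModule)).
  apply NNPP; intros HC; apply not_all_ex_not in HC as [eps HC].
  pose proof (cond_pos eps) as Heps.
  assert (Hfar : forall N, exists n m, (N <= n <= m)%nat /\ eps <= Rabs (sum_n_m x n m)).
  { intros N; apply NNPP; intros Hnear; apply HC; exists N; intros n m Hn Hm.
    destruct (le_lt_dec n m).
    - apply Rnot_le_lt; intros Hle; apply Hnear; exists n, m; split; [lia|assumption].
    - rewrite sum_n_m_zero by lia; change (Rabs 0 < eps); rewrite Rabs_R0; exact Heps. }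
  destruct (INR_unbounded (M / eps ^ 2)) as [K HK].
  destruct (disjoint_blocks x eps Heps Hfar K) as [N [I [HI [_ HKI]]]].
  specialize (H K I HI).
  assert (Heps2 : 0 < eps ^ 2) by (simpl; nra).
  apply (Rmult_lt_compat_r (eps ^ 2)) in HK; [|exact Heps2].
  unfold Rdiv in HK; rewrite Rmult_assoc, Rinv_l in HK by lra; lra.
Qed.

Lemma sum_n_fsum a N : sum_n a N = fsum (S N) a.
Proof.
  induction N as [|N IH]; [now rewrite sum_O, fsum_S; cbn; rewrite Rplus_0_l|].
  now rewrite sum_Sn, IH, (fsum_S (S N)).
Qed.

Lemma Jbounded_sq_series x M : Jbounded x M -> ex_series (sq x) /\ Series (sq x) <= M.
Proof.
  intros H.
  assert (Hpart : forall N, sum_n (sq x) N <= M).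
  { intros N; rewrite sum_n_fsum.
    assert (Hsingle : disjoint_family (S N) (fun i k => k = i)).
    { split.
      - intros i _; split; [now exists i | intros a b c; lia].
      - intros i j _ _ Hij k [-> ->]; now apply Hij. }
    specialize (H _ _ Hsingle); rewrite family_sq_fsum in H.
    erewrite fsum_ext; [exact H|]; intros i _; cbv beta; now rewrite isum_single. }
  assert (Hincr : forall N, sum_n (sq x) N <= sum_n (sq x) (S N)).
  { intros N; rewrite sum_Sn; pose proof (sq_nonneg x (S N)); unfold plus; simpl; lra. }
  destruct (ex_finite_lim_seq_incr _ M Hincr Hpart) as [l Hl].
  split; [now exists l|].
  rewrite (is_series_unique _ l Hl).
  exact (is_lim_seq_le _ (fun _ => M) l M Hpart Hl (is_lim_seq_const M)).
Qed.

Lemma Jbounded_scal x c M : Jbounded x M -> Jbounded (fun k => c * x k) (c ^ 2 * M).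
Proof.
  intros H n I HI; rewrite family_sq_fsum.
  rewrite (fsum_ext n _ (fun i => c ^ 2 * Rabs (isum x (I i)) ^ 2)).
  - rewrite fsum_scal, <- family_sq_fsum.
    apply Rmult_le_compat_l; [apply pow2_ge_0 | apply H, HI].
  - intros i _; rewrite isum_scal, !pow2_abs; ring.
Qed.

(** * Non-positive remainder *)

Definition npr_on (x : nat -> R) (T : nat -> Prop) : Prop := isum x T ^ 2 <= isum (sq x) T.

Lemma restrict_sq x T k : restrict (sq x) T k = Rabs (restrict x T k) ^ 2.
Proof.
  unfold restrict, sq; destruct (excluded_middle_informative (T k)); [reflexivity|].
  rewrite Rabs_R0; ring.
Qed.

Lemma NPR_restrict_iff x T : NPR (restrict x T) <-> npr_on x T.
Proof.
  unfold NPR, npr_on, isum; rewrite pow2_abs.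
  rewrite (Series_ext (fun k => Rabs (restrict x T k) ^ 2) (restrict (sq x) T));
    [reflexivity | intros k; now rewrite restrict_sq].
Qed.

Lemma npr_on_empty x T : (forall k, ~ T k) -> npr_on x T.
Proof. intros H; unfold npr_on; rewrite !isum_empty by assumption; lra. Qed.

Lemma npr_on_single x c : npr_on x (Iv c c).
Proof.
  unfold npr_on; rewrite !(isum_ext _ (Iv c c) (fun k => k = c)) by (unfold Iv; lia).
  rewrite !isum_single; unfold sq; rewrite pow2_abs; lra.
Qed.

Lemma sum_n_restrict x T N : sum_n (restrict x T) N = isum x (fun k => T k /\ (k <= N)%nat).
Proof.
  unfold isum; rewrite (is_series_unique _ (sum_n (restrict x (fun k => T k /\ (k <= N)%nat)) N)).
  - apply sum_n_ext_loc; intros k Hk.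
    assert (T k <-> T k /\ (k <= N)%nat) by (split; [split; [assumption | lia] | tauto]).
    unfold restrict; destruct (excluded_middle_informative (T k)),
      (excluded_middle_informative (T k /\ (k <= N)%nat)); tauto || reflexivity.
  - apply is_series_finite_support; intros k Hk; unfold restrict.
    destruct (excluded_middle_informative _) as [[_ Hle]|]; [lia|reflexivity].
Qed.

(* Partial sums of [x|T] are sums over the finite intervals [T ∩ [0, N]]. *)
Lemma npr_on_convex_of_Iv (x : nat -> R) : ex_series x -> ex_series (sq x) ->
  (forall c d, npr_on x (Iv c d)) -> forall T, convex T -> npr_on x T.
Proof.
  intros Hx Hsq Hiv T HT.
  assert (Hpart : forall N, sum_n (restrict x T) N * sum_n (restrict x T) N <=
                            sum_n (restrict (sq x) T) N).
  { intros N; rewrite !sum_n_restrict.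
    assert (HTN : convex (fun k => T k /\ (k <= N)%nat))
      by (apply convex_and; [exact HT | intros a b c; lia]).
    destruct (classic (exists k, T k /\ (k <= N)%nat)) as [Hne|Hempty].
    - destruct (convex_bounded_Iv _ N HTN Hne) as [c [d E]]; [intros k [_ Hk]; exact Hk|].
      generalize (Hiv c d); unfold npr_on.
      rewrite (isum_ext x _ _ E), (isum_ext (sq x) _ _ E); simpl; lra.
    - generalize (npr_on_empty x _ (fun k Hk => Hempty (ex_intro _ k Hk))); unfold npr_on.
      simpl; lra. }
  assert (HsqT : ex_series (restrict (sq x) T))
    by (apply (ex_series_restrict_subset _ _ (fun _ => True) (sq_nonneg x)); [tauto|];
        now apply ex_series_restrict_full).
  assert (Lx : is_lim_seq (sum_n (restrict x T)) (isum x T))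
    by apply (Series_correct _ (ex_series_restrict_convex x T Hx HT)).
  assert (Lsq : is_lim_seq (sum_n (restrict (sq x) T)) (isum (sq x) T))
    by apply (Series_correct _ HsqT).
  assert (Hle := is_lim_seq_le _ _ _ _ Hpart (is_lim_seq_mult' _ _ _ _ Lx Lx) Lsq).
  unfold npr_on; simpl in *; lra.
Qed.

Lemma Jbounded_of_npr x : ex_series (sq x) -> (forall T, convex T -> npr_on x T) ->
  Jbounded x (Series (sq x)).
Proof.
  intros Hsq H n I HI; rewrite family_sq_fsum.
  apply Rle_trans with (fsum n (fun i => isum (sq x) (I i))).
  - apply fsum_le; intros i Hi; rewrite pow2_abs.
    exact (H _ (convex_family_member n I i HI Hi)).
  - rewrite <- isum_full.
    + apply fsum_isum_disjoint_le; [apply sq_nonneg | | tauto |].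
      * now apply ex_series_restrict_full.
      * intros i j k Hi Hj Hij A B; exact (proj2 HI i j Hi Hj Hij k (conj A B)).
Qed.

(** * Intervals on which NPR fails minimally *)

Lemma isum_guard x (P : Prop) T :
  isum x (fun k => P /\ T k) = if excluded_middle_informative P then isum x T else 0.
Proof.
  destruct (excluded_middle_informative P).
  - apply isum_ext; tauto.
  - apply isum_empty; tauto.
Qed.

Lemma isum_split x A B : ex_series (restrict x (fun k => A k /\ B k)) ->
  ex_series (restrict x (fun k => A k /\ ~ B k)) ->
  isum x A = isum x (fun k => A k /\ B k) + isum x (fun k => A k /\ ~ B k).
Proof.
  intros HB HnB; destruct (isum_union x _ _ HB HnB) as [_ <-]; [tauto|].
  apply isum_ext; intros k; destruct (classic (B k)); tauto.
Qed.

Lemma mul_le_Rmax_same_sign u a s : 0 < a * (s - a) -> u * a <= Rmax 0 (u * s).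
Proof. intros H; unfold Rmax; destruct (Rle_dec 0 (u * s)); nra. Qed.

Section ProperSubintervals.

Variables (x : nat -> R) (p r : nat).

Definition npr_proper : Prop := forall T, convex T -> (forall k, T k -> Iv p r k) ->
  ~ (T p /\ T r) -> npr_on x T.

Hypothesis Hproper : npr_proper.
Hypothesis Hfail : ~ npr_on x (Iv p r).

Lemma ex_series_restrict_in_Iv y T : (forall k, T k -> Iv p r k) -> ex_series (restrict y T).
Proof. intros H; apply ex_series_restrict_bounded with r; intros k Tk; apply H; exact Tk. Qed.

(* Both pieces of [p, r] cut by [T] satisfy NPR while [p, r] does not; hence
   their sums are nonzero of equal sign. *)
Lemma npr_split_sign T : convex T -> T p \/ T r -> ~ (T p /\ T r) ->
  0 < isum x (fun k => T k /\ Iv p r k) *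
      (isum x (Iv p r) - isum x (fun k => T k /\ Iv p r k)).
Proof.
  intros HT Hend Hboth.
  assert (Hsplit : forall y, isum y (Iv p r) =
            isum y (fun k => T k /\ Iv p r k) + isum y (fun k => Iv p r k /\ ~ T k)).
  { intros y; rewrite (isum_split y (Iv p r) T) by (apply ex_series_restrict_in_Iv; tauto).
    f_equal; apply isum_ext; tauto. }
  assert (Hin := Hproper _ (convex_and _ _ HT (convex_Iv p r)) ltac:(tauto) ltac:(tauto)).
  assert (Hout := Hproper _ (convex_Iv_diff T p r HT Hend) ltac:(tauto) ltac:(tauto)).
  assert (Hlt := Rnot_le_lt _ _ Hfail).
  unfold npr_on in *; rewrite !Hsplit in Hlt; rewrite (Hsplit x).
  set (a := isum x (fun k => T k /\ Iv p r k)) in *.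
  set (b := isum x (fun k => Iv p r k /\ ~ T k)) in *.
  replace (a + b - a) with b by ring; nra.
Qed.

Hypothesis Hbd : Jbounded x 1.
Hypothesis Hx : ex_series x.
Hypothesis Hpr : (p <= r)%nat.

Definition part_out (I : nat -> nat -> Prop) i := isum x (fun k => I i k /\ ~ Iv p r k).
Definition part_in (I : nat -> nat -> Prop) i := isum x (fun k => I i k /\ Iv p r k).

(* The members of [I] indexed by [M] (each containing [p] or [r]) are glued to
   [p, r] in the last member; the others lose their part inside [p, r]. *)
Definition merged_family (n : nat) (I : nat -> nat -> Prop) (M : nat -> Prop) :
  nat -> nat -> Prop :=
  fun i k => if lt_dec i n then ~ M i /\ I i k /\ ~ Iv p r k
             else Iv p r k \/ exists j, M j /\ I j k.

Section SeparatingFamily.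

Variables (n : nat) (I : nat -> nat -> Prop).
Hypothesis HI : disjoint_family n I.
Hypothesis Hsep : forall i, (i < n)%nat -> ~ (I i p /\ I i r).

Lemma convex_part_out j : (j < n)%nat -> convex (fun k => I j k /\ ~ Iv p r k).
Proof. intros Hj; apply convex_diff_Iv; [apply (convex_family_member n) | apply Hsep]; auto. Qed.

Lemma isum_split_Iv i : (i < n)%nat -> isum x (I i) = part_out I i + part_in I i.
Proof.
  intros Hi; rewrite (isum_split x (I i) (fun k => ~ Iv p r k)).
  - unfold part_out, part_in; f_equal; apply isum_ext; intros k.
    split; [intros [A B]; split; [exact A | now apply NNPP] | tauto].
  - now apply ex_series_restrict_convex, convex_part_out.
  - apply ex_series_restrict_in_Iv; intros k [_ H]; now apply NNPP.
Qed.

Lemma fsum_part_in_sq_le : fsum n (fun i => part_in I i ^ 2) <= isum (sq x) (Iv p r).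
Proof.
  apply Rle_trans with (fsum n (fun i => isum (sq x) (fun k => I i k /\ Iv p r k))).
  - apply fsum_le; intros i Hi; apply Hproper.
    + apply convex_and; [now apply (convex_family_member n) | apply convex_Iv].
    + tauto.
    + specialize (Hsep i Hi); tauto.
  - apply fsum_isum_disjoint_le; [apply sq_nonneg | | tauto |].
    + now apply ex_series_restrict_in_Iv.
    + intros i j k Hi Hj Hij [A _] [B _]; exact (proj2 HI i j Hi Hj Hij k (conj A B)).
Qed.

Lemma merged_family_convex M : (forall j, M j -> (j < n)%nat /\ (I j p \/ I j r)) ->
  convex_family (S n) (merged_family n I M).
Proof.
  intros HM; split.
  - intros i Hi; unfold merged_family; destruct (lt_dec i n) as [Hin|].
    + apply convex_and; [apply convex_const | now apply convex_part_out].
    + apply convex_union_meeting; [apply convex_Iv | exists p; unfold Iv; lia|].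
      intros j Mj; destruct (HM j Mj) as [Hj Hend].
      split; [now apply (convex_family_member n)|].
      destruct Hend; [exists p | exists r]; unfold Iv; split; auto; lia.
  - assert (Hd : forall i j k, (i < n)%nat -> (j < n)%nat -> i <> j -> I i k -> I j k -> False)
      by (intros i j k Hi Hj Hij A B; exact (proj2 HI i j Hi Hj Hij k (conj A B))).
    assert (Hlast : forall i k, (i < n)%nat -> ~ M i -> I i k -> ~ Iv p r k ->
              ~ (Iv p r k \/ exists j, M j /\ I j k)).
    { intros i k Hi nMi Iik nIv [Ivk|[j [Mj Ijk]]]; [contradiction|].
      destruct (Nat.eq_dec i j) as [->|Hij]; [contradiction|].
      exact (Hd i j k Hi (proj1 (HM j Mj)) Hij Iik Ijk). }
    intros i j k Hi Hj Hij; unfold merged_family.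
    destruct (lt_dec i n), (lt_dec j n); try lia.
    + intros [_ [A _]] [_ [B _]]; exact (Hd i j k ltac:(lia) ltac:(lia) Hij A B).
    + intros [nMi [Iik nIv]]; exact (Hlast i k ltac:(lia) nMi Iik nIv).
    + intros U [nMj [Ijk nIv]]; exact (Hlast j k ltac:(lia) nMj Ijk nIv U).
Qed.

Lemma merged_family_sq M : (forall j, M j -> (j < n)%nat /\ (I j p \/ I j r)) ->
 
  family_sq x (S n) (merged_family n I M) =
  fsum n (fun i => if excluded_middle_informative (M i) then 0 else part_out I i ^ 2) +
  (isum x (Iv p r) +
   fsum n (fun i => if excluded_middle_informative (M i) then part_out I i else 0)) ^ 2.
Proof.
  intros HM; rewrite family_sq_fsum, fsum_S, pow2_abs; f_equal.
  - apply fsum_ext; intros i Hi; unfold merged_family; destruct (lt_dec i n); [|lia].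
    rewrite pow2_abs, isum_guard; unfold part_out.
    destruct (excluded_middle_informative (~ M i)), (excluded_middle_informative (M i));
      tauto || ring.
  - unfold merged_family; destruct (lt_dec n n); [lia|]; f_equal.
    set (D := fun j k => M j /\ (I j k /\ ~ Iv p r k)).
    assert (HD : forall j, (j < n)%nat -> ex_series (restrict x (D j))).
    { intros j Hj; apply ex_series_restrict_convex; [exact Hx|].
      apply convex_and; [apply convex_const | now apply convex_part_out]. }
    destruct (isum_union_family x n D HD) as [HU EU].
    { intros i j k Hi Hj Hij [_ [A _]] [_ [B _]].
      exact (proj2 HI i j Hi Hj Hij k (conj A B)). }
    rewrite (isum_ext x _ (fun k => Iv p r k \/ exists j, (j < n)%nat /\ D j k)).
    + destruct (isum_union x (Iv p r) _ (ex_series_restrict_in_Iv x _ (fun k H => H)) HU)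
        as [_ ->]; [intros k Ivk [j [_ [_ [_ nIv]]]]; contradiction|].
      rewrite EU; f_equal; apply fsum_ext; intros j _; apply isum_guard.
    + intros k; unfold D; split.
      * intros [Ivk|[j [Mj Ijk]]]; [now left|].
        destruct (classic (Iv p r k)); [now left|].
        right; exists j; split; [apply HM|]; tauto.
      * intros [Ivk|[j [_ [Mj [Ijk _]]]]]; [now left | right; now exists j].
Qed.

Lemma merged_family_le M : (forall j, M j -> (j < n)%nat /\ (I j p \/ I j r)) ->
  fsum n (fun i => if excluded_middle_informative (M i) then 0 else part_out I i ^ 2) +
  (isum x (Iv p r) +
   fsum n (fun i => if excluded_middle_informative (M i) then part_out I i else 0)) ^ 2 <= 1.
Proof.
  intros HM; rewrite <- (merged_family_sq M HM).
  exact (Jbounded_convex_family x 1 _ _ Hbd (merged_family_convex M HM)).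
Qed.

End SeparatingFamily.

Definition merge (n : nat) (I : nat -> nat -> Prop) (i : nat) : Prop :=
  (i < n)%nat /\ (I i p \/ I i r) /\ 0 <= part_out I i * isum x (Iv p r).

Lemma cross_term_le n I i : (i < n)%nat -> convex (I i) -> ~ (I i p /\ I i r) ->
  part_out I i * part_in I i <=
  isum x (Iv p r) * (if excluded_middle_informative (merge n I i) then part_out I i else 0).
Proof.
  intros Hi HIi Hsep; unfold merge.
  destruct (classic (I i p \/ I i r)) as [Hend|Hnone].
  - assert (H := mul_le_Rmax_same_sign (part_out I i) _ _ (npr_split_sign _ HIi Hend Hsep)).
    fold (part_in I i) in H; unfold Rmax in H.
    destruct (Rle_dec 0 (part_out I i * isum x (Iv p r))),
      (excluded_middle_informative _); try tauto; lra.
  - destruct (excluded_middle_informative _) as [[_ [Hend _]]|_]; [tauto|].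
    destruct (classic (exists k, I i k /\ Iv p r k)) as [[k0 [Ik0 Ivk0]]|Hdisj].
    + replace (part_out I i) with 0; [lra|]; symmetry; apply isum_empty.
      intros k [Ik nIv]; unfold Iv in *; apply Hnone.
      destruct (Nat.le_gt_cases p k); [right; apply (HIi k0 r k) | left; apply (HIi k p k0)];
        auto; lia.
    + replace (part_in I i) with 0; [lra|]; symmetry; apply isum_empty.
      intros k Hk; apply Hdisj; now exists k.
Qed.

(* Compare with the merged family in which exactly the members whose outer
   part has the sign of [Σ_{[p,r]} x] are glued to [p, r]. *)
Lemma family_sq_separating_le n I : disjoint_family n I ->
  (forall i, (i < n)%nat -> ~ (I i p /\ I i r)) ->
  family_sq x n I <= 1 - (isum x (Iv p r) ^ 2 - isum (sq x) (Iv p r)).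
Proof.
  intros HI Hsep.
  set (s := isum x (Iv p r)); set (q := isum (sq x) (Iv p r)).
  set (u := part_out I); set (v := part_in I).
  set (m := fun i => if excluded_middle_informative (merge n I i) then u i else 0).
  set (c := fun i => if excluded_middle_informative (merge n I i) then 0 else u i ^ 2).
  assert (Hq : 0 <= q)
    by (apply isum_nonneg; [apply sq_nonneg | now apply ex_series_restrict_in_Iv]).
  assert (Hs : q < s ^ 2) by (apply Rnot_le_lt, Hfail).
  assert (Hexpand : family_sq x n I =
            fsum n (fun i => u i ^ 2) + 2 * fsum n (fun i => u i * v i) +
            fsum n (fun i => v i ^ 2)).
  { rewrite family_sq_fsum, <- fsum_scal, <- !fsum_plus; apply fsum_ext; intros i Hi.
    rewrite pow2_abs, (isum_split_Iv n I HI Hsep i Hi); fold u v; ring. }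
  assert (Hinside := fsum_part_in_sq_le n I HI Hsep); fold v q in Hinside.
  assert (Hcross : fsum n (fun i => u i * v i) <= s * fsum n m).
  { rewrite <- fsum_scal; apply fsum_le; intros i Hi.
    apply cross_term_le; [exact Hi | now apply (convex_family_member n) | now apply Hsep]. }
  assert (Hout : fsum n (fun i => u i ^ 2) = fsum n c + fsum n (fun i => m i ^ 2)).
  { rewrite <- fsum_plus; apply fsum_ext; intros i _; unfold c, m.
    destruct (excluded_middle_informative _); ring. }
  assert (Hsame : fsum n (fun i => m i ^ 2) <= fsum n m ^ 2).
  { apply (fsum_sq_le_sq_fsum n s); [intros Hs0; rewrite Hs0 in Hs; simpl in Hs; lra|].
    intros i _; unfold m, merge; destruct (excluded_middle_informative _) as [[_ [_ H]]|];
      [fold u s in H; lra | lra]. }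
  assert (Hmerged := merged_family_le n I HI Hsep (merge n I)
                       ltac:(intros j [Hj [Hend _]]; auto)).
  fold s u in Hmerged; fold m c in Hmerged.
  rewrite Hexpand, Hout; nra.
Qed.

End ProperSubintervals.

(** * Extreme points *)

Definition ind (P : Prop) : R := if excluded_middle_informative P then 1 else 0.

Definition dipole (p r : nat) : nat -> R := fun k => ind (k = p) - ind (k = r).

Lemma ex_series_restrict_finite_support y T N : (forall k, (N < k)%nat -> y k = 0) ->
  ex_series (restrict y T).
Proof.
  intros H; eexists; apply (is_series_finite_support _ N); intros k Hk; unfold restrict.
  destruct (excluded_middle_informative (T k)); [now apply H | reflexivity].
Qed.

Lemma isum_ind_eq p T : isum (fun k => ind (k = p)) T = ind (T p).
Proof.
  transitivity (isum (fun _ => 1) (fun k => T p /\ k = p)).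
  - apply Series_ext; intros k; unfold restrict, ind.
    destruct (Nat.eq_dec k p) as [->|];
      repeat destruct (excluded_middle_informative _); tauto || reflexivity.
  - rewrite isum_guard, isum_single; reflexivity.
Qed.

Lemma isum_dipole p r T : isum (dipole p r) T = ind (T p) - ind (T r).
Proof.
  assert (Hfin : forall q, ex_series (restrict (fun k => ind (k = q)) T)).
  { intros q; apply ex_series_restrict_finite_support with q; intros k Hk; unfold ind.
    destruct (excluded_middle_informative (k = q)); [lia | reflexivity]. }
  unfold isum; rewrite <- !isum_ind_eq; unfold isum; rewrite <- Series_minus by apply Hfin.
  apply Series_ext; intros k; unfold restrict, dipole.
  destruct (excluded_middle_informative (T k)); ring.
Qed.

Lemma isum_add_dipole x p r t T : ex_series (restrict x T) ->
  isum (fun k => x k + t * dipole p r k) T = isum x T + t * (ind (T p) - ind (T r)).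
Proof.
  intros Hx; rewrite isum_plus, isum_scal, isum_dipole; [reflexivity | exact Hx|].
  apply ex_series_restrict_finite_support with (Nat.max p r); intros k Hk.
  unfold dipole, ind; destruct (excluded_middle_informative (k = p)),
    (excluded_middle_informative (k = r)); lia || ring.
Qed.

Lemma sq_shift_ind_le w t P Q : w ^ 2 <= 1 ->
  (w + t * (ind P - ind Q)) ^ 2 <= w ^ 2 + (2 * Rabs t + t ^ 2) * (ind P + ind Q).
Proof.
  intros Hw; assert (Htw : Rabs (t * w) <= Rabs t).
  { rewrite Rabs_mult; pose proof (Rabs_pos t); pose proof (Rabs_pos w).
    assert (Rabs w <= 1) by (rewrite <- pow2_abs in Hw; nra); nra. }
  pose proof (Rle_abs (t * w)); pose proof (Rle_abs (- (t * w))); rewrite Rabs_Ropp in *.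
  unfold ind; destruct (excluded_middle_informative P), (excluded_middle_informative Q); nra.
Qed.

(* Moving mass [t] from [r] to [p] changes nothing on a member containing
   both, and costs at most [2|t| + t^2] at each of [p] and [r] otherwise. *)
Lemma Jbounded_add_dipole x p r delta t : Jbounded x 1 -> ex_series x ->
  0 < delta -> Rabs t <= delta / 8 ->
  (forall n I, disjoint_family n I -> (forall i, (i < n)%nat -> ~ (I i p /\ I i r)) ->
     family_sq x n I <= 1 - delta) ->
  Jbounded (fun k => x k + t * dipole p r k) 1.
Proof.
  intros Hbd Hx Hdelta Ht Hsep n I HI.
  rewrite family_sq_fsum,
    (fsum_ext n _ (fun i => (isum x (I i) + t * (ind (I i p) - ind (I i r))) ^ 2))
    by (intros i Hi; rewrite pow2_abs, isum_add_dipole; [reflexivity|];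
        exact (ex_series_restrict_convex x _ Hx (convex_family_member n I i HI Hi))).
  destruct (classic (exists i0, (i0 < n)%nat /\ I i0 p /\ I i0 r)) as [[i0 [Hi0 [Ip Ir]]]|Hno].
  - apply Rle_trans with (family_sq x n I); [|now apply Hbd].
    rewrite family_sq_fsum; apply Req_le, fsum_ext; intros i Hi.
    assert (I i p <-> I i r).
    { split; intros H.
      - now rewrite <- (disjoint_family_member_unique n I i0 i p HI Hi0 Hi Ip H).
      - now rewrite <- (disjoint_family_member_unique n I i0 i r HI Hi0 Hi Ir H). }
    unfold ind; rewrite pow2_abs; destruct (excluded_middle_informative (I i p)),
      (excluded_middle_informative (I i r)); tauto || ring.
  - specialize (Hsep n I HI ltac:(intros i Hi [Ip Ir]; apply Hno; now exists i)).
    rewrite family_sq_fsum in Hsep.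
    apply Rle_trans with (fsum n (fun i => Rabs (isum x (I i)) ^ 2 +
                            (2 * Rabs t + t ^ 2) * (ind (I i p) + ind (I i r)))).
    + apply fsum_le; intros i Hi; rewrite pow2_abs; apply sq_shift_ind_le.
      exact (Jbounded_sq_isum x 1 _ Hbd (convex_family_member n I i HI Hi)).
    + rewrite fsum_plus, fsum_scal, fsum_plus.
      assert (Hp : fsum n (fun i => ind (I i p)) <= 1)
        by (apply fsum_indicator_le; [lra | intros i j; now apply disjoint_family_member_unique]).
      assert (Hr : fsum n (fun i => ind (I i r)) <= 1)
        by (apply fsum_indicator_le; [lra | intros i j; now apply disjoint_family_member_unique]).
      assert (Hcost : (2 * Rabs t + t ^ 2) *
                (fsum n (fun i => ind (I i p)) + fsum n (fun i => ind (I i r))) <=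
              (2 * Rabs t + t ^ 2) * 2)
        by (apply Rmult_le_compat_l; [pose proof (Rabs_pos t); nra | lra]).
      assert (delta <= 1)
        by (pose proof (family_sq_nonneg x n I); rewrite family_sq_fsum in *; lra).
      pose proof (Rabs_pos t); rewrite <- (pow2_abs t) in *; nra.
Qed.

Lemma extreme_BJ_symmetric x h : extreme_BJ x ->
  in_BJ (fun k => x k + h k) -> in_BJ (fun k => x k - h k) -> forall k, h k = 0.
Proof.
  intros [_ Hext] Hplus Hminus k.
  assert (E := Hext _ _ (1 / 2) Hplus Hminus ltac:(lra) ltac:(intros j; cbv beta; field) k).
  simpl in E; lra.
Qed.

Lemma extreme_npr_Iv_step x c d : extreme_BJ x -> npr_proper x c d -> (c < d)%nat ->
  npr_on x (Iv c d).
Proof.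
  intros Hext Hproper Hcd; apply NNPP; intros Hfail.
  assert (Hbd : Jbounded x 1) by (apply in_BJ_Jbounded, Hext).
  assert (Hx : ex_series x) by exact (Jbounded_ex_series x 1 Hbd).
  set (delta := isum x (Iv c d) ^ 2 - isum (sq x) (Iv c d)).
  assert (Hdelta : 0 < delta) by (apply Rnot_le_lt in Hfail; unfold delta; lra).
  assert (Hkey := family_sq_separating_le x c d Hproper Hfail Hbd Hx ltac:(lia)).
  assert (Hplus := Jbounded_add_dipole x c d delta (delta / 8) Hbd Hx Hdelta
                     ltac:(rewrite Rabs_pos_eq; lra) Hkey).
  assert (Hminus := Jbounded_add_dipole x c d delta (- (delta / 8)) Hbd Hx Hdelta
                      ltac:(rewrite Rabs_Ropp, Rabs_pos_eq; lra) Hkey).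
  replace (fun k => x k + - (delta / 8) * dipole c d k)
    with (fun k => x k - delta / 8 * dipole c d k) in Hminus
    by (apply functional_extensionality; intros k; ring).
  assert (H0 := extreme_BJ_symmetric x _ Hext (Jbounded_in_BJ _ Hplus)
                  (Jbounded_in_BJ _ Hminus) c).
  unfold dipole, ind in H0; destruct (excluded_middle_informative (c = c)) as [_|]; [|lia].
  destruct (excluded_middle_informative (c = d)); [lia|]; lra.
Qed.

Lemma npr_proper_of_shorter x c d :
  (forall c' d', (d' - c' < d - c)%nat -> npr_on x (Iv c' d')) -> npr_proper x c d.
Proof.
  intros IH T HT Hsub Hends.
  destruct (classic (exists k, T k)) as [Hne|Hempty].
  2:{ apply npr_on_empty; intros k Tk; apply Hempty; now exists k. }
  destruct (convex_bounded_Iv T d HT Hne) as [c' [d' E]]; [intros k Tk; apply Hsub, Tk|].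
  assert (Hcd' : (c' <= d')%nat)
    by (destruct Hne as [k Tk]; apply E in Tk; unfold Iv in Tk; lia).
  assert (Hin : Iv c d c' /\ Iv c d d') by (split; apply Hsub, E; unfold Iv; lia).
  assert (Hshorter : (d' - c' < d - c)%nat).
  { unfold Iv in Hin; destruct (Nat.eq_dec c' c) as [->|]; [|lia].
    destruct (Nat.eq_dec d' d) as [->|]; [|lia].
    exfalso; apply Hends; split; apply E; unfold Iv; lia. }
  unfold npr_on; rewrite (isum_ext x _ _ E), (isum_ext (sq x) _ _ E); now apply IH.
Qed.

Lemma extreme_npr_Iv x : extreme_BJ x -> forall c d, npr_on x (Iv c d).
Proof.
  intros Hext c d; remember (d - c)%nat as len eqn:Hlen; revert c d Hlen.
  induction len as [len IH] using (well_founded_induction lt_wf); intros c d Hlen.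
  destruct (lt_eq_lt_dec c d) as [[Hcd| ->]|Hdc].
  - apply extreme_npr_Iv_step; auto.
    apply npr_proper_of_shorter; intros c' d' Hshort; apply (IH (d' - c')%nat); lia.
  - apply npr_on_single.
  - apply npr_on_empty; unfold Iv; lia.
Qed.

Lemma Jbounded_unit_vector c p : c ^ 2 <= 1 -> Jbounded (fun k => c * ind (k = p)) 1.
Proof.
  intros Hc n I HI; rewrite family_sq_fsum.
  apply Rle_trans with (fsum n (fun i => ind (I i p))).
  - apply fsum_le; intros i _; rewrite pow2_abs, isum_scal, isum_ind_eq; unfold ind.
    destruct (excluded_middle_informative (I i p)); nra.
  - apply fsum_indicator_le; [lra|]; intros i j.
    now apply disjoint_family_member_unique.
Qed.

Lemma extreme_BJ_nonzero x : extreme_BJ x -> ~ (forall k, x k = 0).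
Proof.
  intros Hext Hzero.
  assert (Hplus : in_BJ (fun k => x k + ind (k = 0%nat))).
  { replace (fun k => x k + ind (k = 0%nat)) with (fun k => 1 * ind (k = 0%nat))
      by (apply functional_extensionality; intros k; rewrite Hzero; ring).
    apply Jbounded_in_BJ, Jbounded_unit_vector; lra. }
  assert (Hminus : in_BJ (fun k => x k - ind (k = 0%nat))).
  { replace (fun k => x k - ind (k = 0%nat)) with (fun k => -1 * ind (k = 0%nat))
      by (apply functional_extensionality; intros k; rewrite Hzero; ring).
    apply Jbounded_in_BJ, Jbounded_unit_vector; lra. }
  assert (H := extreme_BJ_symmetric x _ Hext Hplus Hminus 0%nat).
  unfold ind in H; destruct (excluded_middle_informative (0%nat = 0%nat)); [lra | tauto].
Qed.

(* If [‖x‖_2 < 1], NPR gives [‖x‖_J <= ‖x‖_2 < 1], and [x] is the midpoint of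
   two distinct multiples of itself. *)
Lemma extreme_sq_series_one x : extreme_BJ x -> ex_series (sq x) -> Series (sq x) <= 1 ->
  (forall T, convex T -> npr_on x T) -> Series (sq x) = 1.
Proof.
  intros Hext Hsq Hle Hnpr; apply Rle_antisym; [exact Hle|]; apply Rnot_lt_le; intros Hlt.
  set (Q := Series (sq x)) in *.
  assert (HQ : Jbounded x Q) by exact (Jbounded_of_npr x Hsq Hnpr).
  assert (HQ0 : 0 <= Q) by exact (Series_nonneg _ (sq_nonneg x) Hsq).
  assert (Hscaled : forall e, (1 + e) ^ 2 * Q <= 1 -> in_BJ (fun k => x k + e * x k)).
  { intros e He.
    replace (fun k => x k + e * x k) with (fun k => (1 + e) * x k)
      by (apply functional_extensionality; intros; ring).
    apply Jbounded_in_BJ; intros n I HI.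
    apply Rle_trans with ((1 + e) ^ 2 * Q); [now apply Jbounded_scal | exact He]. }
  set (eta := (1 - Q) / 2).
  assert (Hplus : in_BJ (fun k => x k + eta * x k)).
  { apply Hscaled; unfold eta.
    assert (0 <= (1 - Q) ^ 2 * (4 - Q)) by (apply Rmult_le_pos; nra); nra. }
  assert (Hminus : in_BJ (fun k => x k - eta * x k)).
  { replace (fun k => x k - eta * x k) with (fun k => x k + (- eta) * x k)
      by (apply functional_extensionality; intros; ring).
    apply Hscaled; unfold eta.
    assert (((1 + Q) / 2) ^ 2 <= 1) by nra; nra. }
  apply (extreme_BJ_nonzero x Hext); intros k.
  assert (H := extreme_BJ_symmetric x _ Hext Hplus Hminus k).
  assert (0 < eta) by (unfold eta; lra); nra.
Qed.

Lemma npr_of_extreme_BJ x : extreme_BJ x -> forall T, convex T -> npr_on x T.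
Proof.
  intros Hext; assert (Hbd : Jbounded x 1) by (apply in_BJ_Jbounded, Hext).
  apply npr_on_convex_of_Iv.
  - exact (Jbounded_ex_series x 1 Hbd).
  - exact (proj1 (Jbounded_sq_series x 1 Hbd)).
  - exact (extreme_npr_Iv x Hext).
Qed.

Lemma npr_on_of_hered x : NPR_hered x -> forall T, convex T -> npr_on x T.
Proof.
  intros Hhered T HT; destruct (classic (exists k, T k)) as [Hne|Hempty].
  - apply NPR_restrict_iff, Hhered; split; assumption.
  - apply npr_on_empty; intros k Tk; apply Hempty; now exists k.
Qed.

Lemma l2norm_eq_1_iff x : ex_series (sq x) -> l2norm x = 1 <-> Series (sq x) = 1.
Proof.
  intros Hsq; unfold l2norm; fold (sq x); split; [|intros ->; apply sqrt_1].
  intros H; rewrite <- (sqrt_sqrt (Series (sq x))), H; [ring|].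
  exact (Series_nonneg _ (sq_nonneg x) Hsq).
Qed.

Lemma term_le_Series d k : (forall j, 0 <= d j) -> ex_series d -> d k <= Series d.
Proof.
  intros Hd Hex; rewrite <- (isum_single d k), <- isum_full.
  apply isum_le_subset; [exact Hd | tauto | now apply ex_series_restrict_full].
Qed.

(* [Σ x^2 = t Σ y^2 + (1 - t) Σ z^2 - t (1 - t) Σ (y - z)^2]. *)
Lemma sq_series_midpoint_eq x y z t : ex_series (sq y) -> ex_series (sq z) ->
  Series (sq y) <= 1 -> Series (sq z) <= 1 -> 0 < t < 1 ->
  (forall k, x k = t * y k + (1 - t) * z k) -> Series (sq x) = 1 ->
  forall k, y k = z k.
Proof.
  intros Hy Hz Hy1 Hz1 Ht Hxyz Hx1 k.
  set (d := fun j => (y j - z j) ^ 2).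
  assert (Hd0 : forall j, 0 <= d j) by (intros; apply pow2_ge_0).
  assert (Hdex : ex_series d).
  { refine (ex_series_le (V := R_CompleteNormedModule) _ (fun j => 2 * sq y j + 2 * sq z j) _
              (ex_series_plus _ _ (ex_series_scal_l 2 _ Hy) (ex_series_scal_l 2 _ Hz))).
    intros j; change norm with Rabs; rewrite Rabs_pos_eq by apply Hd0.
    unfold d, sq; rewrite !pow2_abs; pose proof (pow2_ge_0 (y j + z j)); nra. }
  assert (E : Series (sq x) =
              t * Series (sq y) + (1 - t) * Series (sq z) - (t * (1 - t)) * Series d).
  { rewrite <- !Series_scal_l, <- Series_plus, <- Series_minus.
    - apply Series_ext; intros j; unfold sq, d; rewrite !pow2_abs, Hxyz; ring.
    - exact (ex_series_plus _ _ (ex_series_scal_l t _ Hy) (ex_series_scal_l (1 - t) _ Hz)).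
    - exact (ex_series_scal_l (t * (1 - t)) _ Hdex).
    - exact (ex_series_scal_l t _ Hy).
    - exact (ex_series_scal_l (1 - t) _ Hz). }
  assert (Htt : 0 < t * (1 - t)) by nra.
  assert (t * Series (sq y) + (1 - t) * Series (sq z) <= 1) by nra.
  assert (Hsd : Series d <= 0) by nra.
  assert (Hdk : d k <= 0) by exact (Rle_trans _ _ _ (term_le_Series d k Hd0 Hdex) Hsd).
  unfold d in Hdk; nra.
Qed.

Lemma extreme_BJ_of_npr x : ex_series (sq x) -> Series (sq x) = 1 ->
  (forall T, convex T -> npr_on x T) -> extreme_BJ x.
Proof.
  intros Hsq Hsq1 Hnpr.
  assert (Hbd : Jbounded x 1) by (rewrite <- Hsq1; now apply Jbounded_of_npr).
  split; [now apply Jbounded_in_BJ|].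
  intros y z t Hy Hz Ht Hxyz.
  destruct (Jbounded_sq_series y 1 (in_BJ_Jbounded y Hy)) as [Hy2 Hy1].
  destruct (Jbounded_sq_series z 1 (in_BJ_Jbounded z Hz)) as [Hz2 Hz1].
  exact (sq_series_midpoint_eq x y z t Hy2 Hz2 Hy1 Hz1 Ht Hxyz Hsq1).
Qed.

Theorem corollary3p19 (x : nat -> R) (hx : inJ x) :
  extreme_BJ x <-> (NPR_hered x /\ l2norm x = 1).
Proof.
  split.
  - intros Hext.
    destruct (Jbounded_sq_series x 1 (in_BJ_Jbounded x (proj1 Hext))) as [Hsq Hle].
    assert (Hnpr := npr_of_extreme_BJ x Hext).
    split.
    + intros I HI; apply NPR_restrict_iff, Hnpr; exact (proj2 HI).
    + apply l2norm_eq_1_iff; [exact Hsq|]; now apply extreme_sq_series_one.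
  - intros [Hhered Hl2].
    destruct (inJ_Jbounded x hx) as [M HM].
    destruct (Jbounded_sq_series x M HM) as [Hsq _].
    apply extreme_BJ_of_npr; [exact Hsq | now apply l2norm_eq_1_iff | ].
    now apply npr_on_of_hered.
Qed.
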